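(* Let $p\in[1,\infty]$ and $m,n\in\mathbb N$, and let $$\mathbb H^n_G(m):=\Big\{\frac{\boldsymbol w}{\|\boldsymbol w\|_p}:\boldsymbol w\ne\boldsymbol0,\ w_i\in\{0,\pm\tfrac1m,\pm\tfrac2m,\dots,\pm1\},\ i=1,\dots,n\Big\}.$$ Then $|\mathbb H^n_G(m)|\le(2m+1)^n$, and for any $\boldsymbol x\in\mathbb S^n_p$ there exists $\boldsymbol y\in\mathbb H^n_G(m)$ such that for every $\boldsymbol z\in\mathbb R^n$: if $\boldsymbol y^{\mathrm T}\boldsymbol z\ge0$ then $\boldsymbol y^{\mathrm T}\boldsymbol z-\frac{\|\boldsymbol z\|_1}m\le\boldsymbol x^{\mathrm T}\boldsymbol z\le(1+\frac{n^{1/p}}m)\boldsymbol y^{\mathrm T}\boldsymbol z+\frac{\|\boldsymbol z\|_1}m$; if $\boldsymbol y^{\mathrm T}\boldsymbol z<0$ then $(1+\frac{n^{1/p}}m)\boldsymbol y^{\mathrm T}\boldsymbol z-\frac{\|\boldsymbol z\|_1}m\le\boldsymbol x^{\mathrm T}\boldsymbol z\le\boldsymbol y^{\mathrm T}\boldsymbol z+\frac{\|\boldsymbol z\|_1}m$.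
   Context: $\mathbb S^n_p=\{\boldsymbol x\in\mathbb R^n:\|\boldsymbol x\|_p=1\}$. *)

From HB Require Import structures.
From mathcomp Require Import all_boot all_order all_algebra.
From mathcomp Require Import all_classical all_reals all_analysis.
Unset Printing Implicit Defensive.
Import Order.TTheory GRing.Theory Num.Theory.
Local Open Scope classical_set_scope.
Local Open Scope ring_scope.

(* Vectors of R^n are functions 'I_n -> R.  The exponent p \in [1, +oo] is an
   extended real (p = +oo gives the max norm). *)
Definition pnorm {R : realType} {n : nat} (p : \bar R) (x : 'I_n -> R) : R :=
  match p with
  | EFin q => (\sum_(i < n) `|x i| `^ q) `^ q^-1
  | _ => \big[Num.max/0]_(i < n) `|x i|
  end.

Definition rootp {R : realType} (p : \bar R) (n : nat) : R :=
  match p with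
  | EFin q => n%:R `^ q^-1
  | _ => 1
  end.

Definition dotv {R : realType} {n : nat} (x y : 'I_n -> R) : R :=
  \sum_(i < n) x i * y i.

Definition sphere {R : realType} (n : nat) (p : \bar R) : set ('I_n -> R) :=
  [set x | pnorm p x = 1].

Definition hgrid {R : realType} (n m : nat) : set ('I_n -> R) :=
  [set w | (exists i, w i != 0) /\
           forall i, exists k : int, (`|k| <= m)%N /\ w i = k%:~R / m%:R].

Definition HG {R : realType} (n : nat) (p : \bar R) (m : nat) : set ('I_n -> R) :=
  (fun w : 'I_n -> R => (fun i => w i / pnorm p w)) @` (hgrid n m).

From HB Require Import structures.
From mathcomp Require Import all_boot all_order all_algebra.
From mathcomp Require Import all_classical all_reals all_analysis.
From mathcomp Require Import ring lra zify.
Import Order.TTheory GRing.Theory Num.Theory.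
Local Open Scope classical_set_scope.
Local Open Scope ring_scope.

(* Round every coordinate of x away from zero to the grid (1/m)Z.  The grid point w
   satisfies |x_i| <= |w_i| and |x_i - w_i| <= 1/m, hence
   1 = ||x||_p <= ||w||_p <= || |x| + 1/m ||_p <= 1 + n^(1/p)/m  (Minkowski).
   With y = w / ||w||_p, the product x.z differs from w.z = ||w||_p y.z by at most
   ||z||_1 / m, and the scale ||w||_p lies in [1, 1 + n^(1/p)/m]; the two cases are
   the two signs of y.z.  Each coordinate of a grid point takes one of 2m+1 values,
   which bounds the size of the image. *)

Lemma card_le_sub_range (T : finType) (U : Type) (f : T -> U) (A : set U) :
  A `<=` range f -> (A #<= `I_#|T|)%card.
Proof.
move=> Af; apply: (@card_le_trans _ _ _ ((f \o enum_val) @` [set: 'I_#|T|])).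
  apply: subset_card_le => _ /Af[t _ <-].
  by exists (enum_rank t) => //=; rewrite enum_rankK.
apply: card_le_trans (card_image_le _ _) _.
by have /card_eqPle[] := @card_II #|T|.
Qed.

Section GridRounding.
Context {R : realType}.

Lemma powRKV (q x : R) : q != 0 -> 0 <= x -> (x `^ q) `^ q^-1 = x.
Proof. by move=> q0 x0; rewrite -powRrM mulfV // powRr1. Qed.

Lemma powRVK (q x : R) : q != 0 -> 0 <= x -> (x `^ q^-1) `^ q = x.
Proof. by move=> q0 x0; rewrite -powRrM mulVf // powRr1. Qed.

Lemma powRVl (x r : R) : 0 <= x -> x^-1 `^ r = (x `^ r)^-1.
Proof.
rewrite le_eqVlt => /predU1P[<-|x0].
  by rewrite invr0 /powR eqxx; case: (r == 0); rewrite ?invr1 ?invr0.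
by rewrite -powR_inv1 ?ltW // -powRrM mulN1r powRN.
Qed.

Lemma sum_powR_shift_le (q d : R) n (a : 'I_n -> R) : 1 <= q -> 0 <= d ->
  (forall i, 0 <= a i) -> \sum_(i < n) a i `^ q = 1 ->
  \sum_(i < n) (a i + d) `^ q <= (1 + n%:R `^ q^-1 * d) `^ q.
Proof.
move=> q1 d0 a0 suma.
have q0 : 0 < q by apply: lt_le_trans q1.
have n0 : (0 < n)%N.
  by case: n a a0 suma => // a _; rewrite big_ord0 => /eqP; rewrite eq_sym oner_eq0.
set e := n%:R `^ q^-1; set l := (1 + e * d)^-1.
have e0 : 0 < e by rewrite powR_gt0 // ltr0n.
have ed0 : 0 <= e * d by rewrite mulr_ge0 // ltW.
have /andP[l0 l1] : 0 <= l <= 1.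
  by rewrite invr_ge0 invf_le1 ?lerDl ?addr_ge0 ?ltr_pwDl.
(* [a i + d = (1 + e d) (l a i + (1 - l) / e)] and [(1 / e) ^ q = 1 / n], so
   convexity of [t ^ q] bounds each term by a convex combination that sums to 1. *)
have convex_pt i : (l * a i + (1 - l) * e^-1) `^ q <= l * a i `^ q + (1 - l) / n%:R.
  rewrite -[n%:R](@powRVK q) ?gt_eqF ?ler0n // -/e -(powRVl _ q (ltW e0)).
  by apply: (convex_powR q1 (Itv01 l0 l1));
    rewrite inE/= in_itv/= andbT ?invr_ge0 ?(ltW e0).
have shift_le i : (a i + d) `^ q <= (1 + e * d) `^ q * (l * a i `^ q + (1 - l) / n%:R).
  have -> : a i + d = (1 + e * d) * (l * a i + (1 - l) * e^-1).
    by rewrite /l; field; rewrite !gt_eqF ?ltr_pwDl.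
  rewrite powRM; first by apply: ler_wpM2l; [exact: powR_ge0 | exact: convex_pt].
    by rewrite addr_ge0.
  by rewrite addr_ge0 ?divr_ge0 ?mulr_ge0 ?subr_ge0 // ltW.
apply: le_trans (ler_sum _ (fun i _ => shift_le i)) _.
rewrite -mulr_sumr big_split /= -mulr_sumr suma sumr_const card_ord.
by rewrite mulr1 -[_ *+ n]mulr_natr divfK ?pnatr_eq0 -?lt0n // subrKC mulr1.
Qed.

Lemma round_to_grid (m : nat) (t : R) : (0 < m)%N -> `|t| <= 1 ->
  exists k : int, [/\ (`|k| <= m)%N, `|t| <= `|k%:~R / m%:R|
                    & `|t - k%:~R / m%:R| <= m%:R^-1].
Proof.
move=> m0; have mR : 0 < (m%:R : R) by rewrite ltr0n.
wlog t0 : t / 0 <= t => [wlog_nneg t1|t1].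
  have [/wlog_nneg/(_ t1)//|/ltW t_le0] := leP 0 t.
  have [||k [km tk dk]] := wlog_nneg (- t); rewrite ?oppr_ge0 ?normrN //.
  exists (- k); rewrite abszN mulrNz mulNr normrN opprK -[`|t + _|]normrN opprD.
  by rewrite normrN in tk.
set k := Num.ceil (m%:R * t).
have k0 : 0 <= k by rewrite ceil_ge0 (lt_le_trans (ltrN10 _)) ?mulr_ge0.
have t_le_k : t <= k%:~R / m%:R by rewrite ler_pdivlMr // mulrC ceil_ge.
have k_le_t : k%:~R / m%:R <= t + m%:R^-1.
  have := ceilB1_lt (m%:R * t); rewrite -/k intrB.
  rewrite ler_pdivrMr // mulrDl mulVf ?gt_eqF // [t * _]mulrC; lra.
exists k; split.
- rewrite ger0_norm // in t1.
  by rewrite -lez_nat gez0_abs // ceil_le_int -[X in _ <= X]mulr1 ler_wpM2l ?ler0n.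
- by rewrite ger0_norm // ger0_norm // divr_ge0 ?ler0z // ltW.
- by rewrite ler0_norm ?subr_le0 //; lra.
Qed.

Lemma abs_le_pnorm n (p : \bar R) (x : 'I_n -> R) i : (0 < p)%E -> `|x i| <= pnorm p x.
Proof.
case: p => [q| |] //= => [|_]; last exact: le_bigmax.
rewrite lte_fin => q0; rewrite -[`|x i|](@powRKV q) ?gt_eqF //.
apply: ge0_ler_powR; rewrite ?nnegrE ?invr_ge0 ?(ltW q0) ?powR_ge0 ?sumr_ge0 //.
by rewrite (bigD1 i) //= lerDl sumr_ge0.
Qed.

Lemma pnorm_support n (p : \bar R) (x : 'I_n -> R) :
  p != 0%:E -> pnorm p x != 0 -> exists i, x i != 0.
Proof.
move=> p0; apply: contra_neqP => x0.
have {x0} x0 i : x i = 0 by apply/eqP/negPn/negP => xi; apply: x0; exists i.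
case: p p0 => [q| |] /= => [/[!eqe] q0|_|_];
  [|by elim/big_rec: _ => // i r _ ->; rewrite x0 normr0 maxxx ..].
by rewrite big1 ?powR0 ?invr_neq0 // => i _; rewrite x0 normr0 powR0.
Qed.

Lemma le_pnorm n (p : \bar R) (x y : 'I_n -> R) : (0 <= p)%E ->
  (forall i, `|x i| <= `|y i|) -> pnorm p x <= pnorm p y.
Proof.
case: p => [q| |] //= => [q0|_] xy; last by apply: le_bigmax2 => i _.
rewrite lee_fin in q0.
apply: ge0_ler_powR; rewrite ?nnegrE ?invr_ge0 ?sumr_ge0 //.
by apply: ler_sum => i _; apply: ge0_ler_powR; rewrite ?nnegrE.
Qed.

Lemma pnorm_shift_le n (p : \bar R) (x : 'I_n -> R) (d : R) : (1 <= p)%E -> 0 <= d ->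
  pnorm p x = 1 -> pnorm p (fun i => `|x i| + d) <= 1 + rootp p n * d.
Proof.
case: p => [q| |] //= => [q1|_] d0 x1; last first.
  rewrite mul1r; apply: bigmax_le => [|i _]; first by rewrite addr_ge0.
  by rewrite ger0_norm ?addr_ge0 // lerD2r -x1 le_bigmax.
rewrite lee_fin in q1; have q0 : 0 < q := lt_le_trans ltr01 q1.
have sum1 : \sum_(i < n) `|x i| `^ q = 1.
  by rewrite -[LHS](@powRVK q) ?gt_eqF ?sumr_ge0 // x1 powR1.
rewrite -[X in _ <= X](@powRKV q) ?gt_eqF ?addr_ge0 ?mulr_ge0 ?powR_ge0 //.
apply: ge0_ler_powR; rewrite ?nnegrE ?invr_ge0 ?(ltW q0) ?powR_ge0 ?sumr_ge0 //.
under eq_bigr do rewrite ger0_norm ?addr_ge0 //.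
exact: sum_powR_shift_le.
Qed.

Lemma pnorm_outward_bounds n (p : \bar R) (x w : 'I_n -> R) (d : R) :
  (1 <= p)%E -> 0 <= d -> pnorm p x = 1 ->
  (forall i, `|x i| <= `|w i|) -> (forall i, `|x i - w i| <= d) ->
  1 <= pnorm p w <= 1 + rootp p n * d.
Proof.
move=> p1 d0 x1 xw dxw; have p0 : (0 <= p)%E := le_trans lee01 p1.
rewrite -{1}x1 le_pnorm //=; apply: le_trans (pnorm_shift_le _ _ _ _ p1 d0 x1).
apply: le_pnorm p0 _ => i; rewrite [`|_ + _|]ger0_norm ?addr_ge0 //.
by have := lerB_dist (w i) (x i); rewrite distrC; have := dxw i; lra.
Qed.

Lemma dotv_divl n (w z : 'I_n -> R) (s : R) :
  dotv (fun i => w i / s) z = dotv w z / s.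
Proof. by rewrite /dotv mulr_suml; apply: eq_bigr => i _; rewrite mulrAC. Qed.

Lemma dotv_dist_le n (x w z : 'I_n -> R) (d : R) : (forall i, `|x i - w i| <= d) ->
  `|dotv x z - dotv w z| <= (\sum_(i < n) `|z i|) * d.
Proof.
move=> xw; rewrite /dotv -sumrB mulr_suml; apply: le_trans (ler_norm_sum _ _ _) _.
by apply: ler_sum => i _; rewrite -mulrBl normrM mulrC ler_wpM2l.
Qed.

Lemma rescaled_approx (X Y s c e : R) : 1 <= s <= c -> `|X - s * Y| <= e ->
  (0 <= Y -> Y - e <= X <= c * Y + e) /\ (Y < 0 -> c * Y - e <= X <= Y + e).
Proof.
move=> /andP[s1 sc]; rewrite ler_norml => /andP[lo hi].
by split=> Y0; apply/andP; split; nra.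
Qed.

Lemma card_HG n (p : \bar R) m : (HG n p m #<= `I_((2 * m + 1) ^ n))%card.
Proof.
have <- : #|{ffun 'I_n -> 'I_(2 * m + 1)}| = ((2 * m + 1) ^ n)%N.
  by rewrite card_ffun !card_ord.
apply: card_le_trans (card_image_le _ _) _.
pose F (f : {ffun 'I_n -> 'I_(2 * m + 1)}) i : R := ((f i : nat)%:Z - m%:Z)%:~R / m%:R.
apply: (@card_le_sub_range _ _ F).
move=> w [_ /choice[k wk]].
have k_bound i : (absz (k i + m%:Z)%R < 2 * m + 1)%N by have [] := wk i; lia.
exists [ffun i => Ordinal (k_bound i)] => //; apply/funext => i; rewrite /F ffunE /=.
by have [km ->] := wk i; congr (_%:~R / _); lia.
Qed.

End GridRounding.

Theorem lemma4p10 (R : realType) (p : \bar R) (m n : nat) :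
  (1%:E <= p)%E -> (0 < m)%N ->
  (HG n p m #<= `I_((2 * m + 1) ^ n))%card /\
  forall x : 'I_n -> R, x \in sphere n p ->
  exists2 y, y \in HG n p m &
    forall z : 'I_n -> R,
      let z1 := \sum_(i < n) `|z i| in
      let c := 1 + rootp p n / m%:R in
      (0 <= dotv y z ->
         dotv y z - z1 / m%:R <= dotv x z <= c * dotv y z + z1 / m%:R) /\
      (dotv y z < 0 ->
         c * dotv y z - z1 / m%:R <= dotv x z <= dotv y z + z1 / m%:R).
Proof.
move=> p1 m0; split=> [|x]; first exact: card_HG.
rewrite inE /sphere /= => x1; have p0 : (0 < p)%E := lt_le_trans lte01 p1.
have x_le1 i : `|x i| <= 1 by rewrite -x1 abs_le_pnorm.
have [k xk] := choice (fun i => round_to_grid m (x i) m0 (x_le1 i)).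
pose w i : R := (k i)%:~R / m%:R.
have /andP[w_ge1 w_le] : 1 <= pnorm p w <= 1 + rootp p n / m%:R.
  by apply: pnorm_outward_bounds p1 _ x1 _ _ => [|i|i];
    rewrite ?invr_ge0 //; have [] := xk i.
have w_gt0 : 0 < pnorm p w := lt_le_trans ltr01 w_ge1.
exists (fun i => w i / pnorm p w).
  rewrite inE; exists w => //; split; last by move=> i; exists (k i); have [] := xk i.
  by apply: (pnorm_support _ p); rewrite gt_eqF.
move=> z; rewrite dotv_divl; apply: (rescaled_approx _ _ (pnorm p w)).
  by rewrite w_ge1 w_le.
rewrite mulrC divfK ?gt_eqF //; apply: dotv_dist_le => i.
by have [] := xk i.
Qed.
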